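(* Let $(\Omega,\mathcal{F},\mathbb{P})$ be a probability space, let $n\in\mathbb{N}$, and let $Y_1,\ldots,Y_n$ be real-valued random variables with $\mathbb{E}[|Y_i|]<\infty$ for each $i$. For an integrable random variable $Z$ let $\mathrm{MAD}(Z):=\mathbb{E}\big[|Z-\mathbb{E}[Z]|\big]$. Let $\mathbb{R}^n_+=\{\boldsymbol{x}\in\mathbb{R}^n: x_i\ge 0 \text{ for all } i\}$ and $\Delta^{n-1}=\{\boldsymbol{x}\in\mathbb{R}^n_+:\sum_{i=1}^n x_i=1\}$. Then the following are equivalent: (i) $\mathrm{MAD}\big(\sum_{i=1}^n x_iY_i\big)=\sum_{i=1}^n x_i\,\mathrm{MAD}(Y_i)$ for every $\boldsymbol{x}\in\mathbb{R}^n_+$; (ii) $\mathrm{MAD}\big(\sum_{i=1}^n x_iY_i\big)=\sum_{i=1}^n x_i\,\mathrm{MAD}(Y_i)$ for every $\boldsymbol{x}\in\Delta^{n-1}$; (iii) $\mathrm{MAD}\big(\sum_{i\in I}Y_i\big)=\sum_{i\in I}\mathrm{MAD}(Y_i)$ for every nonempty subset $I\subseteq\{1,\ldots,n\}$; (iv) $(Y_i-\mathbb{E}[Y_i])(Y_j-\mathbb{E}[Y_j])\geq 0$ almost surely for every $i,j\in\{1,\ldots,n\}$ with $i\neq j$. *)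

From HB Require Import structures.
From mathcomp Require Import all_boot all_order all_algebra.
From mathcomp Require Import all_classical all_reals all_analysis.
Set Implicit Arguments. Unset Strict Implicit. Unset Printing Implicit Defensive.
Import Order.TTheory GRing.Theory Num.Theory.
Local Open Scope ring_scope.

Definition MAD d (T : measurableType d) (R : realType) (P : probability T R)
  (Z : T -> R) : \bar R :=
  'E_P[fun w => `|Z w - fine 'E_P[Z]|%R]%E.

From HB Require Import structures.
From mathcomp Require Import all_boot all_order all_algebra.
From mathcomp Require Import all_classical all_reals all_analysis.
From mathcomp Require Import lra measurable_realfun.
Import Order.TTheory GRing.Theory Num.Theory.
Set Implicit Arguments. Unset Strict Implicit. Unset Printing Implicit Defensive.
Local Open Scope ring_scope.

(* Write [D_i = Y_i - E[Y_i]]. For nonnegative weights,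
   [MAD (\sum_i x_i Y_i) = E |\sum_i x_i D_i| <= \sum_i x_i E |D_i|], with equality
   iff almost surely no cancellation occurs in [\sum_i x_i D_i].  If the [D_i] are
   pairwise a.s. of the same sign there is none, which gives (iv) => (i).
   Conversely, equality for [Y_i + Y_j] forces the nonnegative function
   [|D_i| + |D_j| - |D_i + D_j|] to have integral zero, hence to vanish a.s., and
   [|D_i + D_j| = |D_i| + |D_j|] means [D_i D_j >= 0]: this is (iii) => (iv).
   Since [MAD] is positively homogeneous, (ii) extends from the simplex to the
   cone, and (iii) is (i) at the indicator weights of [I]. *)

Lemma normrD_eq_mul_ge0 (R : realDomainType) (a b : R) :
  `|a + b| = `|a| + `|b| -> 0 <= a * b.
Proof.
case: (lerP 0 a) => ha; case: (lerP 0 b) => hb; case: (lerP 0 (a + b)) => hab;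
  rewrite ?(ger0_norm ha) ?(ltr0_norm ha) ?(ger0_norm hb) ?(ltr0_norm hb)
          ?(ger0_norm hab) ?(ltr0_norm hab) => h; nra.
Qed.

Lemma normr_sum_same_sign (R : realDomainType) n (x a : 'I_n -> R) :
  (forall i, 0 <= x i) -> (forall i j, i != j -> 0 <= a i * a j) ->
  `|\sum_(i < n) x i * a i| = \sum_(i < n) x i * `|a i|.
Proof.
move=> x0 aa.
have [[k ak]|nk] := pselect (exists k, 0 < a k).
  have a0 j : 0 <= a j.
    have [->|jk] := eqVneq j k; first exact: ltW.
    by have := aa _ _ jk; rewrite pmulr_lge0.
  rewrite ger0_norm; last by apply: sumr_ge0 => i _; apply: mulr_ge0.
  by apply: eq_bigr => i _; rewrite ger0_norm.
have a0 j : a j <= 0 by rewrite leNgt; apply/negP => h; apply: nk; exists j.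
rewrite ler0_norm; last first.
  by rewrite -oppr_ge0 -sumrN; apply: sumr_ge0 => i _; rewrite -mulrN mulr_ge0 // oppr_ge0.
by rewrite -sumrN; apply: eq_bigr => i _; rewrite ler0_norm // mulrN.
Qed.

Lemma sum_set_indicator (V : pzSemiRingType) (I : finType) (A : {set I}) (F : I -> V) :
  \sum_(i in A) F i = \sum_i (i \in A)%:R * F i.
Proof.
by rewrite big_mkcond; apply: eq_bigr => i _; case: (i \in A); rewrite ?mul1r ?mul0r.
Qed.

Lemma integral_normD_eq_ae_mul_ge0 d (T : measurableType d) (R : realType)
    (mu : {measure set T -> \bar R}) (f g : T -> R) :
  mu.-integrable [set: T] (EFin \o f) -> mu.-integrable [set: T] (EFin \o g) ->
  (\int[mu]_w `|f w + g w|%:E = \int[mu]_w `|f w|%:E + \int[mu]_w `|g w|%:E)%E ->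
  {ae mu, forall w, 0 <= f w * g w}.
Proof.
move=> intf intg hfg.
have /integrable_norm ifn := intf; have /integrable_norm ign := intg.
have /integrable_norm ifgn : mu.-integrable [set: T] (EFin \o (f \+ g)).
  by rewrite (_ : _ \o _ = (EFin \o f) \+ (EFin \o g)) ?funeqE //; exact: integrableD.
pose defect w : R := `|f w| + `|g w| - `|f w + g w|.
have defect_ge0 w : 0 <= defect w by rewrite subr_ge0 ler_normD.
have int_defect : (\int[mu]_w (defect w)%:E = 0)%E.
  under eq_integral do rewrite /defect EFinB.
  rewrite integralB_EFin //; last first.
    by rewrite (_ : _ \o _ = (fun w => `|f w|%:E) \+ (fun w => `|g w|%:E)) ?funeqE //;
      exact: integrableD.
  under eq_integral do rewrite EFinD.
  by rewrite integralD_EFin // -hfg subee // integrable_fin_num.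
have : ae_eq mu setT (fun w => (defect w)%:E) (cst 0%E).
  apply/ae_eq_integral_abs => //.
    apply/measurable_EFinP; apply: measurable_funB.
      by apply: measurable_funD; apply/measurable_EFinP;
        [exact: measurable_int ifn|exact: measurable_int ign].
    by apply/measurable_EFinP; exact: measurable_int ifgn.
  by rewrite -int_defect; apply: eq_integral => w _; rewrite gee0_abs // lee_fin.
apply: filterS => w /(_ I) [] /eqP; rewrite subr_eq0 => /eqP hw.
by apply: normrD_eq_mul_ge0; rewrite hw.
Qed.

Section MAD_basics.
Context d (T : measurableType d) (R : realType) (P : probability T R).

Lemma MAD_integral (Z : T -> R) :
  MAD P Z = (\int[P]_w (`|Z w - fine 'E_P[Z]|)%:E)%E.
Proof. by rewrite /MAD unlock. Qed.

Lemma integrable_centered (Z : T -> R) (c : R) :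
  P.-integrable [set: T] (EFin \o Z) ->
  P.-integrable [set: T] (EFin \o (fun w => Z w - c)).
Proof.
move=> iZ; rewrite (_ : _ \o _ = (fun w => (Z w)%:E - c%:E)%E) ?funeqE //.
exact: integrableB iZ (finite_measure_integrable_cst _ _ measurableT).
Qed.

Lemma MAD_fin_num (Z : T -> R) :
  P.-integrable [set: T] (EFin \o Z) -> MAD P Z \is a fin_num.
Proof.
move=> iZ; rewrite MAD_integral.
exact/integrable_fin_num/integrable_norm/integrable_centered.
Qed.

End MAD_basics.

Section MAD_linear_combination.
Context d (T : measurableType d) (R : realType) (P : probability T R).
Context n (Y : 'I_n -> T -> R).
Hypothesis iY : forall i, P.-integrable [set: T] (EFin \o Y i).

Local Notation c i := (fine 'E_P[Y i]).

Definition MAD_additive_at (x : 'I_n -> R) :=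
  MAD P (fun w => \sum_(i < n) x i * Y i w) = (\sum_(i < n) (x i)%:E * MAD P (Y i))%E.

Let mY i : measurable_fun [set: T] (Y i).
Proof. exact/measurable_EFinP/(measurable_int _ (iY i)). Qed.

Let mdev i : measurable_fun [set: T] (fun w => Y i w - c i).
Proof. exact: measurable_funB. Qed.

Let mcentered x : measurable_fun [set: T] (fun w => \sum_(i < n) x i * (Y i w - c i)).
Proof. by apply: measurable_sum => i; exact: measurable_funM. Qed.

Lemma expectation_lincomb (x : 'I_n -> R) :
  fine 'E_P[fun w => \sum_(i < n) x i * Y i w] = \sum_(i < n) x i * c i.
Proof.
have Ei i : (\int[P]_w (x i * Y i w)%:E = (x i * c i)%:E)%E.
  under eq_integral do rewrite EFinM.
  rewrite (integralZl measurableT (iY i)) EFinM unlock fineK //.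
  exact: integrable_fin_num (iY i).
rewrite [in LHS]unlock; under eq_integral do rewrite -sumEFin.
rewrite integral_sum // => [|i]; last first.
  by under eq_fun do rewrite EFinM; apply: integrableZl => //; exact: iY.
by rewrite (eq_bigr _ (fun i _ => Ei i)) sumEFin.
Qed.

Lemma MAD_lincomb (x : 'I_n -> R) :
  MAD P (fun w => \sum_(i < n) x i * Y i w) =
  (\int[P]_w (`|\sum_(i < n) x i * (Y i w - c i)|)%:E)%E.
Proof.
rewrite MAD_integral expectation_lincomb; apply: eq_integral => w _.
by rewrite -sumrB; congr (`|_|)%:E; apply: eq_bigr => i _; rewrite mulrBr.
Qed.

Lemma MAD_lincombZ (k : R) (x : 'I_n -> R) : 0 <= k ->
  MAD P (fun w => \sum_(i < n) (k * x i) * Y i w) =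
  (k%:E * MAD P (fun w => \sum_(i < n) x i * Y i w)%R)%E.
Proof.
move=> k0; rewrite !MAD_lincomb.
have scale w : `|\sum_(i < n) (k * x i) * (Y i w - c i)| =
               k * `|\sum_(i < n) x i * (Y i w - c i)|.
  rewrite -[k in RHS]ger0_norm // -normrM mulr_sumr.
  by congr `|_|; apply: eq_bigr => i _; rewrite mulrA.
under eq_integral do rewrite scale EFinM.
by rewrite ge0_integralZl_EFin //; exact/measurable_EFinP/measurableT_comp.
Qed.

Lemma MAD_additive_at0 : MAD_additive_at (fun=> 0).
Proof.
rewrite /MAD_additive_at MAD_lincomb [RHS]big1 => [|i _]; last by rewrite mul0e.
rewrite (eq_integral (cst 0%E)) ?integral0 // => w _.
by rewrite big1 ?normr0 // => i _; rewrite mul0r.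
Qed.

Lemma MAD_additive_atZ (k : R) (x : 'I_n -> R) : 0 <= k ->
  MAD_additive_at x -> MAD_additive_at (fun i => k * x i).
Proof.
move=> k0 hx; rewrite /MAD_additive_at MAD_lincombZ // hx fin_num_sume_distrr //.
  by apply: eq_bigr => i _; rewrite EFinM muleA.
move=> i j _ _; rewrite fin_num_adde_defl // fin_numM //; exact: MAD_fin_num.
Qed.

Lemma MAD_additive_at_simplex_cone :
  (forall x, (forall i, 0 <= x i) -> \sum_(i < n) x i = 1 -> MAD_additive_at x) ->
  forall x, (forall i, 0 <= x i) -> MAD_additive_at x.
Proof.
move=> simplex x x0; have s0 : 0 <= \sum_(i < n) x i by exact: sumr_ge0.
have [s_eq0|s_neq0] := eqVneq (\sum_(i < n) x i) 0.
  have -> : x = fun=> 0 by apply/funext => i; exact: (psumr_eq0P _ s_eq0).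
  exact: MAD_additive_at0.
have -> : x = fun i => (\sum_(j < n) x j) * (x i / \sum_(j < n) x j).
  by apply/funext => i; rewrite mulrC divfK.
apply: MAD_additive_atZ => //; apply: simplex => [i|].
  by rewrite divr_ge0.
by rewrite -mulr_suml mulfV.
Qed.

Lemma MAD_additive_at_indicator (I : {set 'I_n}) :
  MAD_additive_at (fun i => (i \in I)%:R) ->
  MAD P (fun w => \sum_(i in I) Y i w) = (\sum_(i in I) MAD P (Y i))%E.
Proof.
rewrite /MAD_additive_at => hI.
under eq_fun do rewrite sum_set_indicator; rewrite hI [RHS]big_mkcond.
by apply: eq_bigr => i _; case: (i \in I); rewrite ?mul1e ?mul0e.
Qed.

Lemma MAD_additive_pair_same_sign (i j : 'I_n) : i != j ->
  MAD P (fun w => \sum_(k in [set i; j]) Y k w) =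
    (\sum_(k in [set i; j]) MAD P (Y k))%E ->
  {ae P, forall w, 0 <= (Y i w - c i) * (Y j w - c j)}.
Proof.
move=> ij; under [X in MAD P X]eq_fun do rewrite sum_set_indicator.
rewrite MAD_lincomb big_setU1 ?inE // big_set1 !MAD_integral => hij.
apply: integral_normD_eq_ae_mul_ge0; [exact: integrable_centered..|].
rewrite -hij; apply: eq_integral => w _; congr (`|_|)%:E.
by rewrite -sum_set_indicator big_setU1 ?inE // big_set1.
Qed.

Lemma MAD_additive_at_same_sign :
  (forall i j, i != j -> {ae P, forall w, 0 <= (Y i w - c i) * (Y j w - c j)}) ->
  forall x, (forall i, 0 <= x i) -> MAD_additive_at x.
Proof.
move=> same_sign x x0.
have all_same_sign : \forall w \ae P, forall i j, i != j ->
    0 <= (Y i w - c i) * (Y j w - c j).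
  apply: filter_forall => i; apply: filter_forall => j.
  have [->|ij] := eqVneq i j; first exact: nearW.
  by apply: filterS (same_sign i j ij) => w + _.
rewrite /MAD_additive_at MAD_lincomb.
transitivity (\int[P]_w (\sum_(i < n) x i * `|Y i w - c i|)%:E)%E.
  apply: ae_eq_integral => //.
  - exact/measurable_EFinP/measurableT_comp.
  - apply/measurable_EFinP; apply: measurable_sum => i.
    by apply: measurable_funM => //; exact: measurableT_comp.
  by apply: filterS all_same_sign => w H _; rewrite normr_sum_same_sign.
under eq_integral do rewrite -sumEFin.
rewrite ge0_integral_sum //; last first.
- by move=> i w _; rewrite lee_fin mulr_ge0.
- move=> i; apply/measurable_EFinP; apply: measurable_funM => //.
  exact: measurableT_comp.
apply: eq_bigr => i _; under eq_integral do rewrite EFinM.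
by rewrite ge0_integralZl_EFin ?MAD_integral //; exact/measurable_EFinP/measurableT_comp.
Qed.

End MAD_linear_combination.

Theorem theorem2 (d : measure_display) (T : measurableType d) (R : realType)
  (P : probability T R) (n : nat) (Y : 'I_n -> {RV P >-> R})
  (hY : forall i, P.-integrable [set: T] (EFin \o Y i)) :
  [<->
   (* (i) *)
   (forall x : 'I_n -> R, (forall i, 0 <= x i) ->
      MAD P (fun w => \sum_(i < n) x i * Y i w)
      = (\sum_(i < n) (x i)%:E * MAD P (Y i))%E);
   (* (ii) *)
   (forall x : 'I_n -> R, (forall i, 0 <= x i) -> \sum_(i < n) x i = 1 ->
      MAD P (fun w => \sum_(i < n) x i * Y i w)
      = (\sum_(i < n) (x i)%:E * MAD P (Y i))%E);
   (* (iii) *)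
   (forall I : {set 'I_n}, I != finset.set0 ->
      MAD P (fun w => \sum_(i in I) Y i w) = (\sum_(i in I) MAD P (Y i))%E);
   (* (iv) *)
   (forall i j : 'I_n, i != j ->
      {ae P, forall w, 0 <= (Y i w - fine 'E_P[Y i]) * (Y j w - fine 'E_P[Y j])})].
Proof.
tfae.
- by move=> cone x x0 _; exact: cone.
- move=> /(MAD_additive_at_simplex_cone hY) cone I _.
  by apply: MAD_additive_at_indicator; apply: cone => i; exact: ler0n.
- move=> pairs i j ij; apply: (MAD_additive_pair_same_sign hY ij).
  by apply: pairs; apply/set0Pn; exists i; rewrite !inE eqxx.
- exact: MAD_additive_at_same_sign.
Qed.
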